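(* Let $[Z_i(\tau_i,u_i)]_{i=1}^N$ be per-agent return distributions with quantile functions $\theta_i(\tau_i,u_i,\omega)$, let $k_1,\dots,k_N\ge0$ be constants not depending on the joint action $\boldsymbol u$, and let $Z_{jt}(\boldsymbol\tau,\boldsymbol u)$ be a joint return distribution (e.g. represented as a mixture of Dirac masses $\sum_{j=1}^J p_j(\boldsymbol\tau,\boldsymbol u,\omega_j)\delta_{\theta(\boldsymbol\tau,\boldsymbol u,\omega_j)}$) whose quantile function is $$\theta(\boldsymbol\tau,\boldsymbol u,\omega)=\sum_{i=1}^N k_i\,\theta_i(\tau_i,u_i,\omega),\qquad \omega\in(0,1].$$ Let $\psi_\alpha$ be either a Value-at-Risk metric $\mathrm{VaR}_\alpha$ or a distortion risk measure (e.g. CVaR, Wang, CPW). Then $[Z_i]_{i=1}^N$ satisfy the RIGM principle for $Z_{jt}$ with risk metric $\psi_\alpha$, i.e. $\arg\max_{\boldsymbol u}\psi_\alpha[Z_{jt}(\boldsymbol\tau,\boldsymbol u)]=(\arg\max_{u_1}\psi_\alpha[Z_1(\tau_1,u_1)],\dots,\arg\max_{u_N}\psi_\alpha[Z_N(\tau_N,u_N)])$.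
   Context: There are $N$ agents; agent $i$ has observation history $\tau_i$ and a finite action set $U_i$; $\boldsymbol\tau=(\tau_1,\dots,\tau_N)$, $\boldsymbol u=(u_1,\dots,u_N)$. For a real random variable $Z$ with CDF $F_Z$, its quantile function is $\theta_Z(\omega)=\inf\{z\in\mathbb{R}:\omega\le F_Z(z)\}$, $\omega\in(0,1]$. $\mathrm{VaR}_\alpha(Z)=\theta_Z(\alpha)$. A distortion risk measure with differentiable distortion function $g:[0,1]\to[0,1]$ is $\psi(Z)=\int_0^1 g'(\omega)\theta_Z(\omega)\,d\omega$ (integrals assumed finite); examples: CVaR with $g(\omega)=\min(\omega/\alpha,1)$, Wang with $g(\omega)=\Phi_{\mathcal N}(\Phi_{\mathcal N}^{-1}(\omega)+\alpha)$ ($\Phi_{\mathcal N}$ the standard Gaussian CDF), CPW with $g(\omega)=\omega^\alpha/(\omega^\alpha+(1-\omega)^\alpha)^{1/\alpha}$. RIGM principle: as in the displayed equality of the claim. Standing assumption of the paper: argmax sets are singletons (ties broken by smallest index). *)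

From HB Require Import structures.
From mathcomp Require Import all_boot all_order all_algebra.
From mathcomp Require Import all_classical all_reals all_analysis.
Set Implicit Arguments. Unset Strict Implicit. Unset Printing Implicit Defensive.
Import Order.TTheory GRing.Theory Num.Theory.
Import numFieldNormedType.Exports.
Local Open Scope classical_set_scope.
Local Open Scope ring_scope.

Section RiskDefs.
Variable R : realType.

(* A real random variable is represented by its law, a probability measure on R. *)
Definition cdf_of (P : probability R R) (z : R) : R := fine (P [set` `]-oo, z]%R]).

Definition quantile (P : probability R R) (w : R) : R :=
  inf [set z : R | w <= cdf_of P z].

Definition VaR (alpha : R) (P : probability R R) : R := quantile P alpha.

Definition distortion_risk (g : R -> R) (P : probability R R) : R :=
  Rintegral lebesgue_measure [set` `]0, 1]%R] (fun w : R => derive1 g w * quantile P w).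

Definition distortion_function (g : R -> R) : Prop :=
  [/\ (forall w, 0 <= w <= 1 -> 0 <= g w <= 1),
      (forall w, 0 < w < 1 -> derivable g w 1),
      {in `[0, 1]%R &, {homo g : x y / x <= y}},
      g 0 = 0 & g 1 = 1].

Inductive risk_metric :=
  | RM_VaR of R
  | RM_distortion of (R -> R).

Definition psi (rm : risk_metric) (P : probability R R) : R :=
  match rm with
  | RM_VaR alpha => VaR alpha P
  | RM_distortion g => distortion_risk g P
  end.

Definition valid_metric (rm : risk_metric) : Prop :=
  match rm with
  | RM_VaR alpha => 0 < alpha <= 1
  | RM_distortion g => distortion_function g
  end.

Definition finite_risk (rm : risk_metric) (P : probability R R) : Prop :=
  match rm with
  | RM_VaR _ => True
  | RM_distortion g =>
      lebesgue_measure.-integrable [set` `]0, 1]%R]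
        (fun w => (derive1 g w * quantile P w)%:E)
  end.

End RiskDefs.

Definition argmax_set (R : realType) (A : Type) (f : A -> R) : set A :=
  [set x | forall y, f y <= f x].

From HB Require Import structures.
From mathcomp Require Import all_boot all_order all_algebra.
From mathcomp Require Import all_classical all_reals all_analysis.
Set Implicit Arguments. Unset Strict Implicit. Unset Printing Implicit Defensive.
Import Order.TTheory GRing.Theory Num.Theory.
Local Open Scope classical_set_scope.
Local Open Scope ring_scope.

(* Both kinds of risk metric are linear in the quantile function: VaR evaluates
   it at alpha, a distortion risk measure integrates it against g'.  Hence a
   joint quantile sum_i k_i theta_i gives psi(Z_jt(u)) = sum_i k_i psi(Z_i(u_i)),
   a nonnegative combination of terms each depending on one coordinate u_i only;
   it is maximized by the tuple of individual maximizers, and uniqueness of the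
   joint maximizer turns this into equality of the argmax sets. *)

Section RintegralSum.
Context d (T : measurableType d) (R : realType).
Variable mu : {measure set T -> \bar R}.

Lemma Rintegral_sum (I : Type) (D : set T) (s : seq I) (F : I -> T -> R) :
  measurable D -> (forall i, mu.-integrable D (EFin \o F i)) ->
  Rintegral mu D (fun x => \sum_(i <- s) F i x) =
  \sum_(i <- s) Rintegral mu D (F i).
Proof.
move=> mD intF; elim: s => [|a s IH].
  under eq_Rintegral do rewrite big_nil.
  by rewrite big_nil Rintegral_cst // mul0r.
under eq_Rintegral do rewrite big_cons.
rewrite big_cons -IH RintegralD //.
apply: eq_integrable mD _ _ _ (integrable_sum mD s (fun i _ => intF i)).
by move=> x _ /=; rewrite sumEFin.
Qed.

Lemma Rintegral_lin_comb (I : Type) (D : set T) (s : seq I) (k : I -> R)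
    (F : I -> T -> R) :
  measurable D -> (forall i, mu.-integrable D (EFin \o F i)) ->
  Rintegral mu D (fun x => \sum_(i <- s) k i * F i x) =
  \sum_(i <- s) k i * Rintegral mu D (F i).
Proof.
move=> mD intF; rewrite Rintegral_sum //.
  by apply: eq_bigr => i _; rewrite RintegralZl.
move=> i; apply: eq_integrable mD _ _ _ (integrableZl mD (k i) (intF i)).
by move=> x _ /=; rewrite EFinM.
Qed.

End RintegralSum.

Section RiskOfQuantileCombination.
Context (R : realType) (I : finType).
Variables (P : probability R R) (Ps : I -> probability R R) (k : I -> R).
Hypothesis quantile_comb : forall w, 0 < w <= 1 ->
  quantile P w = \sum_i k i * quantile (Ps i) w.

Lemma VaR_quantile_comb alpha : 0 < alpha <= 1 ->
  VaR alpha P = \sum_i k i * VaR alpha (Ps i).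
Proof. exact: quantile_comb. Qed.

Lemma distortion_risk_quantile_comb g :
  (forall i, finite_risk (RM_distortion g) (Ps i)) ->
  distortion_risk g P = \sum_i k i * distortion_risk g (Ps i).
Proof.
move=> fin; rewrite /distortion_risk -Rintegral_lin_comb //.
apply: eq_Rintegral => w; rewrite inE /= in_itv /= => w01.
by rewrite quantile_comb // mulr_sumr; apply: eq_bigr => i _; rewrite mulrCA.
Qed.

Lemma psi_quantile_comb (rm : risk_metric R) :
  valid_metric rm -> (forall i, finite_risk rm (Ps i)) ->
  psi rm P = \sum_i k i * psi rm (Ps i).
Proof.
case: rm => [alpha|g] /= rm_ok fin; first exact: VaR_quantile_comb.
exact: distortion_risk_quantile_comb.
Qed.

End RiskOfQuantileCombination.

Lemma argmax_set_lin_comb (R : realType) (I : finType) (U : I -> Type)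
    (f : forall i, U i -> R) (k : I -> R) (ustar : forall i, U i) :
  (forall i, 0 <= k i) -> (forall i, argmax_set (f i) (ustar i)) ->
  argmax_set (fun u : forall i, U i => \sum_i k i * f i (u i)) ustar.
Proof.
move=> k_ge0 ustar_max u; apply: ler_sum => i _.
by apply: ler_wpM2l; [exact: k_ge0 | exact: ustar_max].
Qed.

Lemma argmax_set1_uniq (R : realType) (A : Type) (f : A -> R) (x0 x : A) :
  argmax_set f = [set x0] -> argmax_set f x -> x = x0.
Proof. by move=> ->. Qed.

Theorem theorem4 (R : realType) (N : nat)
  (Tau : 'I_N -> Type) (U : 'I_N -> finType)
  (Z : forall i : 'I_N, Tau i -> U i -> probability R R)
  (k : 'I_N -> R) (hk : forall i, 0 <= k i)
  (Zjt : (forall i, Tau i) -> (forall i, U i) -> probability R R)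
  (hquant : forall (tau : forall i, Tau i) (u : forall i, U i) (w : R),
      0 < w <= 1 ->
      quantile (Zjt tau u) w = \sum_(i < N) k i * quantile (Z i (tau i) (u i)) w)
  (rm : risk_metric R) (hrm : valid_metric rm)
  (hfin : forall i (t : Tau i) (a : U i), finite_risk rm (Z i t a))
  (tau : forall i, Tau i) (ustar : forall i, U i)
  (hind : forall i,
      argmax_set (fun a : U i => psi rm (Z i (tau i) a)) = [set ustar i])
  (hjt : exists u0 : (forall i, U i),
      argmax_set (fun u => psi rm (Zjt tau u)) = [set u0]) :
  argmax_set (fun u : (forall i, U i) => psi rm (Zjt tau u)) = [set ustar].
Proof.
have psi_jt u : psi rm (Zjt tau u) = \sum_(i < N) k i * psi rm (Z i (tau i) (u i)).
  exact: psi_quantile_comb (hquant tau u) rm hrm (fun i => hfin i _ _).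
have ustar_max : argmax_set (fun u => psi rm (Zjt tau u)) ustar.
  move=> u; rewrite !psi_jt.
  apply: (argmax_set_lin_comb (f := fun i a => psi rm (Z i (tau i) a)) hk _ u).
  by move=> i; rewrite hind.
have [u0 argmax_jt] := hjt.
by rewrite (argmax_set1_uniq argmax_jt ustar_max).
Qed.
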